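(* Let $U=\{\xi_1,\dots,\xi_p\}\subset\mathbb{R}^k$ be finite, for $j\in\Lambda=\{1,\dots,m\}$ let $f_j:\mathbb{R}^n\times U\to\mathbb{R}$ with $x\mapsto f_j(x,\xi_i)$ continuously differentiable for each $i\in\bar\Lambda=\{1,\dots,p\}$, and let $\Phi=(\Phi_1,\dots,\Phi_m)$ with $\Phi_j(x)=\max_{i\in\bar\Lambda}f_j(x,\xi_i)$. (i) Let $\{x^k\}$ be any infinite sequence of non-critical points in $\mathbb{R}^n$ such that $\Phi(x^{k+1})\le\Phi(x^k)$ (componentwise) for all $k$. If $x^*$ is any accumulation point of $\{x^k\}$, then $\Phi(x^* )\le\Phi(x^k)$ for all $k$ and $\lim_{k\to\infty}\Phi(x^k)=\Phi(x^* )$. Moreover, $\Phi$ is constant on the set of accumulation points of $\{x^k\}$. (ii) If $\{x^k\}$ is generated by Algorithm 1 (described in the context) and has an accumulation point, then all conclusions of (i) hold for this sequence.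
   Context: For vectors, $u\le v$ means componentwise. For $x\in\mathbb{R}^n$, $I_j(x)=\{i\in\bar\Lambda:f_j(x,\xi_i)=\Phi_j(x)\}$; $x^*$ is a critical point for $\Phi$ if there is no $v\in\mathbb{R}^n$ with $\nabla f_j(x^*,\xi_i)^Tv<0$ for all $j\in\Lambda$, $i\in I_j(x^* )$; otherwise it is non-critical. For $x\in\mathbb{R}^n$, let $\vartheta_x(t)=\max_{j\in\Lambda}\max_{i\in\bar\Lambda}\{f_j(x,\xi_i)+\nabla f_j(x,\xi_i)^Tt-\Phi_j(x)\}$, let $t(x)$ be the unique minimizer over $t$ of $\vartheta_x(t)+\frac12\|t\|^2$, and $\Theta(x)$ its optimal value. Algorithm 1: choose $\epsilon>0$, $\beta\in(0,1)$, $x^0\in\mathbb{R}^n$, set $k=0$. Step 2: compute $t^k=t(x^k)$ and $\Theta(x^k)$. Step 3: if $|\Theta(x^k)|<\epsilon$, stop. Step 4: let $\alpha_k$ be the largest $\alpha\in\{1/2^r:r=1,2,\dots\}$ such that for all $j$, $\Phi_j(x^k+\alpha t^k)\le\Phi_j(x^k)+\alpha\beta\big(\max_{i\in\bar\Lambda}\{f_j(x^k,\xi_i)+\nabla f_j(x^k,\xi_i)^Tt^k\}-\Phi_j(x^k)\big)$. Step 5: set $x^{k+1}=x^k+\alpha_kt^k$, $k:=k+1$, go to Step 2. *)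

From HB Require Import structures.
From mathcomp Require Import all_boot all_order all_algebra.
From mathcomp Require Import all_classical all_reals all_analysis.
Set Implicit Arguments. Unset Strict Implicit. Unset Printing Implicit Defensive.
Import Order.TTheory GRing.Theory Num.Theory numFieldNormedType.Exports.
Local Open Scope ring_scope.
Local Open Scope classical_set_scope.

(* maximum of a finite nonempty family (the value 0 on the empty index type
   is a junk value, never used since the index sets are assumed nonempty) *)
Definition bmax {R : realType} {q : nat} (g : 'I_q -> R) : R :=
  match [pick i : 'I_q] with
  | Some i0 => \big[Num.max/g i0]_(i < q) g i
  | None => 0
  end.

Section Defs.
Context {R : realType} {n d p m : nat}.
Variables (xi : 'I_p -> 'rV[R]_d) (f : 'I_m -> 'rV[R]_n -> 'rV[R]_d -> R).

Definition Phi (j : 'I_m) (x : 'rV[R]_n) : R := bmax (fun i : 'I_p => f j x (xi i)).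

Definition PhiV (x : 'rV[R]_n) : 'rV[R]_m := \row_j Phi j x.

(* grad f_j(x, xi_i)^T v, i.e. the differential of y |-> f_j(y, xi_i) at x applied to v *)
Definition gradv (j : 'I_m) (i : 'I_p) (x v : 'rV[R]_n) : R :=
  'd (fun y => f j y (xi i)) x v.

Definition active (j : 'I_m) (x : 'rV[R]_n) (i : 'I_p) : Prop :=
  f j x (xi i) = Phi j x.

Definition critical (x : 'rV[R]_n) : Prop :=
  ~ (exists v : 'rV[R]_n, forall j i, active j x i -> gradv j i x v < 0).

Definition noncritical (x : 'rV[R]_n) : Prop := ~ critical x.

Definition sqnorm (t : 'rV[R]_n) : R := \sum_(l < n) t ord0 l ^+ 2.

Definition vartheta (x t : 'rV[R]_n) : R :=
  bmax (fun j : 'I_m => bmax (fun i : 'I_p => f j x (xi i) + gradv j i x t - Phi j x)).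

Definition subobj (x t : 'rV[R]_n) : R := vartheta x t + 2^-1 * sqnorm t.

(* t is the (unique) minimizer t(x) of the subproblem; Theta(x) = subobj x t *)
Definition is_tdir (x t : 'rV[R]_n) : Prop := forall s, subobj x t <= subobj x s.

Definition armijo (beta : R) (x t : 'rV[R]_n) (a : R) : Prop :=
  forall j, Phi j (x + a *: t) <=
    Phi j x + a * beta * (bmax (fun i : 'I_p => f j x (xi i) + gradv j i x t) - Phi j x).

(* x is an infinite sequence generated by Algorithm 1 with parameters eps, beta
   and starting point x 0 (the algorithm never stops) *)
Definition alg1_seq (eps beta : R) (x : nat -> 'rV[R]_n) : Prop :=
  exists (t : nat -> 'rV[R]_n) (alpha : nat -> R), forall k,
    [/\ is_tdir (x k) (t k),
        ~ (`|subobj (x k) (t k)| < eps),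
        (exists r, (0 < r)%N /\ alpha k = (2 ^+ r)^-1) /\ armijo beta (x k) (t k) (alpha k),
        (forall r, (0 < r)%N -> armijo beta (x k) (t k) ((2 ^+ r)^-1) ->
                   (2 ^+ r)^-1 <= alpha k)
      & x k.+1 = x k + alpha k *: t k].

Definition conclusions (x : nat -> 'rV[R]_n) : Prop :=
  (forall xs, cluster (x @ \oo) xs ->
     (forall k j, Phi j xs <= Phi j (x k)) /\ ((fun k => PhiV (x k)) @ \oo --> PhiV xs))
  /\ (forall a b, cluster (x @ \oo) a -> cluster (x @ \oo) b -> PhiV a = PhiV b).

End Defs.

(* Part (i) only uses that every Phi_j is continuous, being a finite maximum of
   continuous functions, and that Phi_j(x^k) is nonincreasing in k.  As x^* is
   a cluster point, Phi_j(x^k) comes arbitrarily close to the value of Phi_j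
   at x^* for arbitrarily large k; monotonicity then makes that value a lower
   bound of the whole sequence, to which the monotone sequence converges.
   Limits are unique, so Phi takes the same value at all cluster points.
   For (ii), t = 0 is admissible in the subproblem and vartheta_x(0) <= 0, so
   the minimizer satisfies vartheta_x(t(x)) <= 0.  The bracket in the Armijo
   test of Step 4 is bounded by vartheta_x(t(x)), hence every step of
   Algorithm 1 decreases each Phi_j and part (i) applies. *)
From HB Require Import structures.
From mathcomp Require Import all_boot all_order all_algebra.
From mathcomp Require Import all_classical all_reals all_analysis.
From mathcomp Require Import lra.
Import Order.TTheory GRing.Theory Num.Theory numFieldNormedType.Exports.
Local Open Scope ring_scope.
Local Open Scope classical_set_scope.

Section FiniteMax.
Context {R : realType} {q : nat}.

Lemma le_bmax (g : 'I_q -> R) i : g i <= bmax g.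
Proof.
rewrite /bmax; case: pickP => [i0 _|/(_ i)//].
have : i \in index_enum 'I_q by rewrite mem_index_enum.
elim: (index_enum _) => // a r IH; rewrite inE big_cons => /orP[/eqP->|/IH h].
  by rewrite le_max lexx.
by rewrite le_max h orbT.
Qed.

Lemma bmax_attained (g : 'I_q -> R) : (0 < q)%N -> exists i, bmax g = g i.
Proof.
move=> q_gt0; rewrite /bmax; case: pickP => [i0 _|/(_ (Ordinal q_gt0))//].
apply: (big_ind (fun y => exists i, y = g i)); first by exists i0.
  by move=> _ _ [i ->] [i' ->]; case: (leP (g i) (g i')) => _; [exists i'|exists i].
by move=> i _; exists i.
Qed.

Lemma bmax_le (g : 'I_q -> R) c : (0 < q)%N -> (forall i, g i <= c) -> bmax g <= c.
Proof. by move=> q_gt0 gc; have [i ->] := bmax_attained g q_gt0. Qed.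

Lemma bmax_continuous (T : topologicalType) (g : 'I_q -> T -> R) :
  (forall i, continuous (g i)) -> continuous (fun x => bmax (g^~ x)).
Proof.
move=> g_cont; rewrite /bmax; case: pickP => [i0 _|_]; last exact: cst_continuous.
elim: (index_enum _) => [|a s IH].
  rewrite [X in continuous X](_ : _ = g i0); first exact: g_cont.
  by apply/funext => x; rewrite big_nil.
rewrite [X in continuous X](_ : _ = g a \max (fun x => \big[Num.max/g i0 x]_(i <- s) g i x)).
  exact: max_fun_continuous.
by apply/funext => x; rewrite big_cons.
Qed.

End FiniteMax.

Lemma cvg_mx_entrywise {K : realFieldType} {T : Type} (F : set_system T)
    {FF : Filter F} a b (u : T -> 'M[K]_(a, b)) (l : 'M[K]_(a, b)) :
  (forall i j, (fun t => u t i j) @ F --> l i j) -> u @ F --> l.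
Proof.
move=> u_cvg; apply/cvgrPdist_lt => e e_gt0.
have : \forall t \near F, forall ij : 'I_a * 'I_b,
    `|l ij.1 ij.2 - u t ij.1 ij.2| < e.
  by apply: filter_forall => -[i j]; move/cvgrPdist_lt: (u_cvg i j); apply.
apply: filterS => t near_l; change (mx_norm (l - u t) < e).
have [->//|/mx_norm_neq0 [ij ->]] := eqVneq (mx_norm (l - u t)) 0.
by rewrite !mxE; exact: near_l.
Qed.

Section NonincreasingAlongCluster.
Context {R : realType} {T : topologicalType}.
Context {u : nat -> T} {phi : T -> R} {xs : T}.
Hypotheses (phi_cont : continuous phi) (xs_cluster : cluster (u @ \oo) xs).
Hypothesis phi_u_noninc : forall k, phi (u k.+1) <= phi (u k).

Lemma cluster_frequently (A : set T) N :
  nbhs xs A -> exists2 k, (N <= k)%N & A (u k).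
Proof.
move=> xsA; have [] := xs_cluster (u @` [set k | (N <= k)%N]) A _ xsA.
  by exists N => // k Nk; exists k.
by move=> _ [[k Nk <-] Auk]; exists k.
Qed.

Lemma phi_close_frequently N (e : R) : 0 < e ->
  exists2 k, (N <= k)%N & `|phi (u k) - phi xs| < e.
Proof.
move=> e_gt0; apply: (cluster_frequently [set y | `|phi y - phi xs| < e]).
have /cvgrPdist_lt/(_ e e_gt0) := phi_cont xs.
by apply: filterS => y; rewrite distrC.
Qed.

Lemma phi_u_nonincreasing {k l} : (k <= l)%N -> phi (u l) <= phi (u k).
Proof.
move=> /subnK <-; elim: (l - k)%N => // e IH.
by rewrite addSn; exact: le_trans (phi_u_noninc _) IH.
Qed.

Lemma phi_cluster_le k : phi xs <= phi (u k).
Proof.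
rewrite leNgt; apply/negP; rewrite -subr_gt0 => gap_gt0.
have [l kl] := phi_close_frequently k _ gap_gt0.
by rewrite ltr_norml => /andP[+ _]; have := phi_u_nonincreasing kl; lra.
Qed.

Lemma phi_u_cvg : phi \o u @ \oo --> phi xs.
Proof.
apply/cvgrPdist_lt => e e_gt0; have [K _] := phi_close_frequently 0 _ e_gt0.
rewrite ltr_norml => /andP[_ close_K]; exists K => // l /= Kl.
have := phi_u_nonincreasing Kl; have := phi_cluster_le l.
by rewrite ltr_norml; lra.
Qed.

End NonincreasingAlongCluster.

Section PhiDescent.
Context {R : realType} {n d p m : nat}.
Variables (xi : 'I_p -> 'rV[R]_d) (f : 'I_m -> 'rV[R]_n -> 'rV[R]_d -> R).
Hypotheses (p_gt0 : (0 < p)%N) (m_gt0 : (0 < m)%N).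

Lemma Phi_continuous j :
  (forall i, continuous (fun y => f j y (xi i))) -> continuous (Phi xi f j).
Proof. exact: bmax_continuous. Qed.

Lemma conclusions_of_nonincreasing (x : nat -> 'rV[R]_n) :
  (forall j i, continuous (fun y => f j y (xi i))) ->
  (forall k j, Phi xi f j (x k.+1) <= Phi xi f j (x k)) ->
  conclusions xi f x.
Proof.
move=> f_cont x_noninc; have Phi_cont j := Phi_continuous _ (f_cont j).
have PhiV_cvg xs : cluster (x @ \oo) xs ->
    (fun k => PhiV xi f (x k)) @ \oo --> PhiV xi f xs.
  move=> xs_cl; apply: cvg_mx_entrywise => i j.
  rewrite mxE; under eq_fun do rewrite mxE.
  exact: phi_u_cvg (Phi_cont j) xs_cl (x_noninc^~ j).
split=> [xs xs_cl | a b a_cl b_cl].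
  split; last exact: PhiV_cvg.
  by move=> k j; exact: phi_cluster_le (Phi_cont j) xs_cl (x_noninc^~ j) k.
exact: cvg_unique (PhiV_cvg a a_cl) (PhiV_cvg b b_cl).
Qed.

Lemma sqnorm_ge0 (t : 'rV[R]_n) : 0 <= sqnorm t.
Proof. by apply: sumr_ge0 => l _; exact: sqr_ge0. Qed.

Lemma sqnorm0 : sqnorm (0 : 'rV[R]_n) = 0.
Proof. by rewrite /sqnorm big1 // => l _; rewrite mxE expr0n. Qed.

Lemma vartheta_at0_le0 x : vartheta xi f x 0 <= 0.
Proof.
apply: bmax_le => // j; apply: bmax_le => // i.
by rewrite /gradv linear0 addr0 subr_le0; exact: le_bmax.
Qed.

Lemma tdir_vartheta_le0 {x t} : is_tdir xi f x t -> vartheta xi f x t <= 0.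
Proof.
move=> /(_ 0); rewrite /subobj sqnorm0 mulr0 addr0 => le_t0.
have : 0 <= 2^-1 * sqnorm t by rewrite mulr_ge0 ?invr_ge0 ?ler0n ?sqnorm_ge0.
by have := vartheta_at0_le0 x; lra.
Qed.

Lemma model_decrease_le_vartheta j x t :
  bmax (fun i => f j x (xi i) + gradv xi f j i x t) - Phi xi f j x
    <= vartheta xi f x t.
Proof.
have [i ->] := bmax_attained (fun i => f j x (xi i) + gradv xi f j i x t) p_gt0.
apply: le_trans (le_bmax _ j).
exact: (le_bmax (fun i => f j x (xi i) + gradv xi f j i x t - Phi xi f j x) i).
Qed.

Lemma armijo_descent {beta x t a} j : 0 <= beta -> 0 <= a ->
  vartheta xi f x t <= 0 -> armijo xi f beta x t a ->
  Phi xi f j (x + a *: t) <= Phi xi f j x.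
Proof.
move=> beta_ge0 a_ge0 vt_le0 /(_ j) /le_trans; apply; rewrite gerDl.
apply: mulr_ge0_le0; first exact: mulr_ge0.
exact: le_trans (model_decrease_le_vartheta j x t) vt_le0.
Qed.

Lemma alg1_seq_nonincreasing eps beta x : 0 <= beta ->
  alg1_seq xi f eps beta x -> forall k j, Phi xi f j (x k.+1) <= Phi xi f j (x k).
Proof.
move=> beta_ge0 [t [alpha step]] k j.
have [t_dir _ [[r [_ alpha_eq]] arm] _ ->] := step k.
apply: armijo_descent j beta_ge0 _ (tdir_vartheta_le0 t_dir) arm.
by rewrite alpha_eq invr_ge0 exprn_ge0.
Qed.

End PhiDescent.

Theorem lemma4p4 (R : realType) (n d p m : nat)
  (xi : 'I_p -> 'rV[R]_d) (f : 'I_m -> 'rV[R]_n -> 'rV[R]_d -> R)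
  (hp : (0 < p)%N) (hm : (0 < m)%N) (xi_inj : injective xi)
  (hC1 : forall j i,
      (forall x, differentiable (fun y => f j y (xi i)) x) /\
      (forall v, continuous (fun x => 'd (fun y => f j y (xi i)) x v))) :
  (* (i) *)
  (forall x : nat -> 'rV[R]_n,
      (forall k, noncritical xi f (x k)) ->
      (forall k j, Phi xi f j (x k.+1) <= Phi xi f j (x k)) ->
      conclusions xi f x)
  /\
  (* (ii) *)
  (forall (eps beta : R) (x : nat -> 'rV[R]_n),
      0 < eps -> 0 < beta < 1 ->
      alg1_seq xi f eps beta x ->
      (exists xs, cluster (x @ \oo) xs) ->
      conclusions xi f x).
Proof.
have f_cont j i : continuous (fun y => f j y (xi i)).
  by move=> y; exact: differentiable_continuous ((hC1 j i).1 y).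
split=> [x _ x_noninc | eps beta x _ /andP[beta_gt0 _] x_alg _].
  exact: conclusions_of_nonincreasing.
apply: conclusions_of_nonincreasing => //.
exact: alg1_seq_nonincreasing (ltW beta_gt0) x_alg.
Qed.
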